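(* Let $(\omega,\gamma,\mu,c)$ be a normalized quasi-abelian 3-cocycle on a finite crossed module $(G,X,\partial)$. Let $H=H(\omega,\gamma,\mu,c)$ be the vector space with basis $\{t_xg\}_{(x,g)\in X\times G}$, with product $(t_xg)(t_yh)=\delta_{x,{}^hy}\,\gamma_{g,h}(y)^{-1}\,t_y(gh)$, unit $1=\sum_{x\in X}t_xe$, coproduct $\Delta(t_xg)=\sum_{a,b\in X,\ ab=x}\mu_g(a,b)\,t_ag\otimes t_bg$, counit $\varepsilon(t_xg)=\delta_{x,e}$, Drinfeld associator $\Phi=\sum_{x,y,z\in X}\omega(x,y,z)\,t_xe\otimes t_ye\otimes t_ze$, elements $\alpha=1$, $\beta=\sum_{x\in X}\omega(x^{-1},x,x^{-1})\,t_xe$, linear map $S(t_xg)=\frac{\gamma_{g^{-1},g}(x^{-1})}{\mu_g(x,x^{-1})}\,t_{{}^g(x^{-1})}g^{-1}$, and $R=\sum_{x,y\in X}c(x,y)\,t_xe\otimes t_y\partial(x)$. Then these data make $H$ a quasi-triangular quasi-Hopf algebra (with antipode $(S,\alpha,\beta)$, $S$ an algebra anti-automorphism) with universal $R$-matrix $R$.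
   Context: $\mathbb{K}$ is an algebraically closed field of characteristic $0$. Quasi-Hopf and quasi-triangular quasi-Hopf algebras are in the sense of Drinfeld (as in Kassel, Quantum Groups, Chapter XV: a quasi-bialgebra $(H,\Delta,\varepsilon,\Phi)$ with antipode $(S,\alpha,\beta)$ and an invertible universal $R$-matrix). A finite crossed module is a triple $(G,X,\partial)$ with $G,X$ finite groups, $G$ acting on $X$ by automorphisms $(g,x)\mapsto {}^{g}x$, and $\partial:X\to G$ a homomorphism with ${}^{\partial(x)}x'=xx'x^{-1}$ and $\partial({}^gx)=g\partial(x)g^{-1}$. A quasi-abelian 3-cocycle on it is a quadruple $(\omega,\gamma,\mu,c)$ of functions $\omega:X^3\to\mathbb{K}^\times$, $(g,h,x)\mapsto\gamma_{g,h}(x)$ on $G\times G\times X$, $(g,x,y)\mapsto\mu_g(x,y)$ on $G\times X\times X$, $c:X^2\to\mathbb{K}^\times$, such that for all $g,h,k\in G$, $w,x,y,z\in X$: (a) $\omega(x,y,z)\omega(w,xy,z)\omega(w,x,y)=\omega(w,x,yz)\omega(wx,y,z)$; (b) $\gamma_{h,k}(x)\gamma_{g,hk}(x)=\gamma_{gh,k}(x)\gamma_{g,h}({}^kx)$; (c) $\frac{\mu_g(y,z)\mu_g(x,yz)}{\mu_g(xy,z)\mu_g(x,y)}=\frac{\omega({}^gx,{}^gy,{}^gz)}{\omega(x,y,z)}$; (d) $\frac{\gamma_{g,h}(x)\gamma_{g,h}(y)}{\gamma_{g,h}(xy)}=\frac{\mu_g({}^hx,{}^hy)\mu_h(x,y)}{\mu_{gh}(x,y)}$;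 (e) $\frac{c({}^gx,{}^gy)}{c(x,y)}=\frac{\mu_g(xyx^{-1},x)}{\mu_g(x,y)}\cdot\frac{\gamma_{g\partial(x)g^{-1},g}(y)}{\gamma_{g,\partial(x)}(y)}$; (f) $c(xy,z)=\frac{\omega(x,y,z)\,\omega((xy)z(xy)^{-1},x,y)}{\omega(x,yzy^{-1},y)\,\gamma_{\partial(x),\partial(y)}(z)}\,c(x,yzy^{-1})\,c(y,z)$; (g) $c(x,yz)=\frac{\omega(xyx^{-1},x,z)}{\omega(x,y,z)\,\omega(xyx^{-1},xzx^{-1},x)\,\mu_{\partial(x)}(y,z)}\,c(x,y)\,c(x,z)$. It is normalized if $\omega(x,y,z)=1$ whenever one of $x,y,z$ is $e$, $\gamma_{g,h}(x)=1$ whenever one of $g,h,x$ is $e$, $\mu_g(x,y)=1$ whenever one of $g,x,y$ is $e$, and $c(x,y)=1$ whenever $x$ or $y$ is $e$. *)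

From HB Require Import structures.
From mathcomp Require Import all_boot all_order all_algebra all_fingroup.
Set Implicit Arguments. Unset Strict Implicit. Unset Printing Implicit Defensive.
Import GRing.Theory.
Local Open Scope ring_scope.

(* Generic quasi-triangular quasi-Hopf algebra axioms (Drinfeld / Kassel     *)
(* Ch. XV) for a finite-dimensional algebra H with a finite basis indexed by *)
(* the finType B, everything given in coordinates w.r.t. that basis.          *)
(* An element of H is f : B -> K (f = sum_p f p t_p); an element of H^{(x)n}  *)
(* is a function of n basis indices (coefficient of t_p1 (x) ... (x) t_pn).  *)
(*   m p q r   = coefficient of t_r in t_p t_q   (product)                    *)
(*   u         = coordinates of the unit 1                                    *)
(*   dl p q r  = coefficient of t_q (x) t_r in Delta(t_p)                     *)
(*   e p       = epsilon(t_p)                                                 *)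
(*   Phi       = coordinates of the associator in H^{(x)3}                    *)
(*   alpha, beta in H;  Sm p q = coefficient of t_q in S(t_p);                *)
(*   Rm        = coordinates of the R-matrix in H^{(x)2}.                     *)
Section QuasiHopf.
Variables (K : fieldType) (B : finType).
Variables (m : B -> B -> B -> K) (u : B -> K) (dl : B -> B -> B -> K)
  (e : B -> K) (Phi : B -> B -> B -> K) (alpha beta : B -> K)
  (Sm : B -> B -> K) (Rm : B -> B -> K).

Definition dlt (q : B) : B -> K := fun p => (p == q)%:R.

Definition mulH (f g : B -> K) : B -> K :=
  fun r => \sum_p \sum_q f p * g q * m p q r.
Definition mul2 (F G : B -> B -> K) : B -> B -> K :=
  fun r1 r2 => \sum_p1 \sum_p2 \sum_q1 \sum_q2
    F p1 p2 * G q1 q2 * m p1 q1 r1 * m p2 q2 r2.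
Definition mul3 (F G : B -> B -> B -> K) : B -> B -> B -> K :=
  fun r1 r2 r3 => \sum_p1 \sum_p2 \sum_p3 \sum_q1 \sum_q2 \sum_q3
    F p1 p2 p3 * G q1 q2 q3 * m p1 q1 r1 * m p2 q2 r2 * m p3 q3 r3.
Definition mul4 (F G : B -> B -> B -> B -> K) : B -> B -> B -> B -> K :=
  fun r1 r2 r3 r4 => \sum_p1 \sum_p2 \sum_p3 \sum_p4
    \sum_q1 \sum_q2 \sum_q3 \sum_q4
    F p1 p2 p3 p4 * G q1 q2 q3 q4 *
    m p1 q1 r1 * m p2 q2 r2 * m p3 q3 r3 * m p4 q4 r4.

Definition one2 : B -> B -> K := fun r1 r2 => u r1 * u r2.
Definition one3 : B -> B -> B -> K := fun r1 r2 r3 => u r1 * u r2 * u r3.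
Definition one4 : B -> B -> B -> B -> K :=
  fun r1 r2 r3 r4 => u r1 * u r2 * u r3 * u r4.

Definition DeltaH (f : B -> K) : B -> B -> K :=
  fun q r => \sum_p f p * dl p q r.
Definition epsH (f : B -> K) : K := \sum_p f p * e p.
Definition SH (f : B -> K) : B -> K := fun q => \sum_p f p * Sm p q.

Definition id_D (F : B -> B -> K) : B -> B -> B -> K :=
  fun s1 s2 s3 => \sum_p F s1 p * dl p s2 s3.
Definition D_id (F : B -> B -> K) : B -> B -> B -> K :=
  fun s1 s2 s3 => \sum_p F p s3 * dl p s1 s2.
Definition id_id_D (F : B -> B -> B -> K) : B -> B -> B -> B -> K :=
  fun s1 s2 s3 s4 => \sum_p F s1 s2 p * dl p s3 s4.
Definition id_D_id (F : B -> B -> B -> K) : B -> B -> B -> B -> K :=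
  fun s1 s2 s3 s4 => \sum_p F s1 p s4 * dl p s2 s3.
Definition D_id_id (F : B -> B -> B -> K) : B -> B -> B -> B -> K :=
  fun s1 s2 s3 s4 => \sum_p F p s3 s4 * dl p s1 s2.
Definition eps_id (F : B -> B -> K) : B -> K := fun q => \sum_p F p q * e p.
Definition id_eps (F : B -> B -> K) : B -> K := fun p => \sum_q F p q * e q.
Definition id_eps_id (F : B -> B -> B -> K) : B -> B -> K :=
  fun p r => \sum_q F p q r * e q.

(* leg notation: for T = sum X (x) Y (x) Z, T_{ijk} puts X in slot i,
   Y in slot j, Z in slot k (Drinfeld's convention). *)
Definition leg312 (F : B -> B -> B -> K) := fun s1 s2 s3 => F s3 s1 s2.
Definition leg132 (F : B -> B -> B -> K) := fun s1 s2 s3 => F s1 s3 s2.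
Definition leg231 (F : B -> B -> B -> K) := fun s1 s2 s3 => F s2 s3 s1.
Definition leg213 (F : B -> B -> B -> K) := fun s1 s2 s3 => F s2 s1 s3.
Definition leg12 (F : B -> B -> K) := fun s1 s2 s3 => F s1 s2 * u s3.
Definition leg13 (F : B -> B -> K) := fun s1 s2 s3 => F s1 s3 * u s2.
Definition leg23 (F : B -> B -> K) := fun s1 s2 s3 => u s1 * F s2 s3.
Definition flip (F : B -> B -> K) := fun s1 s2 => F s2 s1.
Definition one_tensor (F : B -> B -> B -> K) :=
  fun s1 s2 s3 s4 => u s1 * F s2 s3 s4.
Definition tensor_one (F : B -> B -> B -> K) :=
  fun s1 s2 s3 s4 => F s1 s2 s3 * u s4.

Definition is_assoc_algebra : Prop :=
  (forall f g h, mulH (mulH f g) h = mulH f (mulH g h)) /\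
  (forall f, mulH u f = f) /\ (forall f, mulH f u = f).

Definition quasi_bialgebra_ax (Phii : B -> B -> B -> K) : Prop :=
  (forall f g, DeltaH (mulH f g) = mul2 (DeltaH f) (DeltaH g)) /\
  DeltaH u = one2 /\
  (forall f g, epsH (mulH f g) = epsH f * epsH g) /\
  epsH u = 1 /\
  mul3 Phi Phii = one3 /\ mul3 Phii Phi = one3 /\
  (forall f, id_D (DeltaH f) = mul3 (mul3 Phi (D_id (DeltaH f))) Phii) /\
  mul4 (id_id_D Phi) (D_id_id Phi) =
    mul4 (mul4 (one_tensor Phi) (id_D_id Phi)) (tensor_one Phi) /\
  (forall f, eps_id (DeltaH f) = f) /\ (forall f, id_eps (DeltaH f) = f) /\
  id_eps_id Phi = one2.

Definition antipode_ax (Phii : B -> B -> B -> K) : Prop :=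
  bijective SH /\
  (forall f g, SH (mulH f g) = mulH (SH g) (SH f)) /\ SH u = u /\
  (forall f, (fun r => \sum_q1 \sum_q2 DeltaH f q1 q2 *
                 mulH (mulH (SH (dlt q1)) alpha) (dlt q2) r)
             = (fun r => epsH f * alpha r)) /\
  (forall f, (fun r => \sum_q1 \sum_q2 DeltaH f q1 q2 *
                 mulH (mulH (dlt q1) beta) (SH (dlt q2)) r)
             = (fun r => epsH f * beta r)) /\
  (fun r => \sum_p1 \sum_p2 \sum_p3 Phi p1 p2 p3 *
     mulH (mulH (mulH (mulH (dlt p1) beta) (SH (dlt p2))) alpha) (dlt p3) r)
    = u /\
  (fun r => \sum_p1 \sum_p2 \sum_p3 Phii p1 p2 p3 *
     mulH (mulH (mulH (mulH (SH (dlt p1)) alpha) (dlt p2)) beta) (SH (dlt p3)) r)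
    = u.

Definition quasitriangular_ax (Phii : B -> B -> B -> K) (Ri : B -> B -> K)
  : Prop :=
  mul2 Rm Ri = one2 /\ mul2 Ri Rm = one2 /\
  (forall f, flip (DeltaH f) = mul2 (mul2 Rm (DeltaH f)) Ri) /\
  D_id Rm = mul3 (mul3 (mul3 (mul3 (leg312 Phi) (leg13 Rm)) (leg132 Phii))
                   (leg23 Rm)) Phi /\
  id_D Rm = mul3 (mul3 (mul3 (mul3 (leg231 Phii) (leg13 Rm)) (leg213 Phi))
                   (leg12 Rm)) Phii.

Definition quasitriangular_quasiHopf : Prop :=
  is_assoc_algebra /\
  exists (Phii : B -> B -> B -> K) (Ri : B -> B -> K),
    quasi_bialgebra_ax Phii /\ antipode_ax Phii /\ quasitriangular_ax Phii Ri.

End QuasiHopf.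

Section CrossedModule.
Variables (K : fieldType) (G X : finGroupType)
  (act : G -> X -> X) (d : X -> G).

Definition crossed_module : Prop :=
  (forall x, act 1%g x = x) /\
  (forall g h x, act (g * h)%g x = act g (act h x)) /\
  (forall g x y, act g (x * y)%g = (act g x * act g y)%g) /\
  (forall x y, d (x * y)%g = (d x * d y)%g) /\
  (forall x x', act (d x) x' = (x * x' * x^-1)%g) /\
  (forall g x, d (act g x) = (g * d x * g^-1)%g).

Variables (omega : X -> X -> X -> K) (gamma : G -> G -> X -> K)
  (mu : G -> X -> X -> K) (c : X -> X -> K).

Definition quasi_abelian_3cocycle : Prop :=
  (forall x y z, omega x y z != 0) /\
  (forall g h x, gamma g h x != 0) /\
  (forall g x y, mu g x y != 0) /\
  (forall x y, c x y != 0) /\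
  (* (a) *)
  (forall w x y z, omega x y z * omega w (x * y)%g z * omega w x y
                   = omega w x (y * z)%g * omega (w * x)%g y z) /\
  (* (b) *)
  (forall g h k x, gamma h k x * gamma g (h * k)%g x
                   = gamma (g * h)%g k x * gamma g h (act k x)) /\
  (* (c) *)
  (forall g x y z, mu g y z * mu g x (y * z)%g / (mu g (x * y)%g z * mu g x y)
                   = omega (act g x) (act g y) (act g z) / omega x y z) /\
  (* (d) *)
  (forall g h x y, gamma g h x * gamma g h y / gamma g h (x * y)%g
                   = mu g (act h x) (act h y) * mu h x y / mu (g * h)%g x y) /\
  (* (e) *)
  (forall g x y, c (act g x) (act g y) / c x y
       = mu g (x * y * x^-1)%g x / mu g x y *
         (gamma (g * d x * g^-1)%g g y / gamma g (d x) y)) /\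
  (* (f) *)
  (forall x y z, c (x * y)%g z
       = omega x y z * omega ((x * y) * z * (x * y)^-1)%g x y /
         (omega x (y * z * y^-1)%g y * gamma (d x) (d y) z) *
         c x (y * z * y^-1)%g * c y z) /\
  (* (g) *)
  (forall x y z, c x (y * z)%g
       = omega (x * y * x^-1)%g x z /
         (omega x y z * omega (x * y * x^-1)%g (x * z * x^-1)%g x *
          mu (d x) y z) * c x y * c x z).

Definition normalized_cocycle : Prop :=
  (forall x y z, (x == 1%g) || (y == 1%g) || (z == 1%g) -> omega x y z = 1) /\
  (forall g h x, (g == 1%g) || (h == 1%g) || (x == 1%g) -> gamma g h x = 1) /\
  (forall g x y, (g == 1%g) || (x == 1%g) || (y == 1%g) -> mu g x y = 1) /\
  (forall x y, (x == 1%g) || (y == 1%g) -> c x y = 1).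

(* The algebra H(omega, gamma, mu, c) with basis t_x g, (x,g) in X * G,      *)
(* in coordinates w.r.t. this basis (basis index p = (x, g)).                *)
(* (t_x g)(t_y h) = delta_{x, ^h y} gamma_{g,h}(y)^{-1} t_y (gh) *)
Definition Hm (p q r : X * G) : K :=
  if [&& p.1 == act q.2 q.1, r.1 == q.1 & r.2 == (p.2 * q.2)%g]
  then (gamma p.2 q.2 q.1)^-1 else 0.
Definition Hu (r : X * G) : K := if r.2 == 1%g then 1 else 0.
(* Delta(t_x g) = sum_{ab = x} mu_g(a,b) t_a g (x) t_b g *)
Definition Hdl (p q r : X * G) : K :=
  if [&& q.2 == p.2, r.2 == p.2 & (q.1 * r.1)%g == p.1]
  then mu p.2 q.1 r.1 else 0.
Definition He (p : X * G) : K := if p.1 == 1%g then 1 else 0.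
Definition HPhi (p q r : X * G) : K :=
  if [&& p.2 == 1%g, q.2 == 1%g & r.2 == 1%g]
  then omega p.1 q.1 r.1 else 0.
Definition Halpha : X * G -> K := Hu.
Definition Hbeta (p : X * G) : K :=
  if p.2 == 1%g then omega (p.1^-1)%g p.1 (p.1^-1)%g else 0.
(* S(t_x g) = gamma_{g^-1,g}(x^-1)/mu_g(x,x^-1) t_{^g(x^-1)} g^-1 *)
Definition HS (p q : X * G) : K :=
  if (q.1 == act p.2 (p.1^-1)%g) && (q.2 == (p.2^-1)%g)
  then gamma (p.2^-1)%g p.2 (p.1^-1)%g / mu p.2 p.1 (p.1^-1)%g else 0.
(* R = sum_{x,y} c(x,y) t_x e (x) t_y d(x) *)
Definition HR (p q : X * G) : K :=
  if (p.2 == 1%g) && (q.2 == d p.1) then c p.1 q.1 else 0.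

End CrossedModule.

From HB Require Import structures.
From mathcomp Require Import all_boot all_order all_algebra all_fingroup.
From mathcomp Require Import ring.
From Stdlib Require Import FunctionalExtensionality.
Import GRing.Theory.
Local Open Scope ring_scope.
Set Implicit Arguments. Unset Strict Implicit. Unset Printing Implicit Defensive.

(* In the basis [t_x g], the product [t_p t_q] has a component along [t_r]
   only when [q = (r.1, h)] and [p = (h.r.1, r.2 h^-1)] for some [h] in [G],
   so every product in a tensor power of [H] collapses to a sum over [G^n];
   the associator and the R-matrix live in [G]-degree 1 (in their first leg,
   for [R]) and collapse it to a single term.  Each axiom thus becomes a
   pointwise identity between values of omega, gamma, mu and c, which is one
   of the cocycle conditions: associativity is (b), multiplicativity of the
   coproduct is (d), quasi-coassociativity is (c), the pentagon is (a), the
   antipode axioms follow from (a)-(d), [Delta^op = R Delta R^-1] from (e)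
   and (b), and the two hexagons are (f) and (g). *)

Section Funext.
Variables A B C D E : Type.

Lemma funext2 (F F' : A -> B -> E) : (forall a b, F a b = F' a b) -> F = F'.
Proof. by move=> FF'; do 2!apply: functional_extensionality => ?. Qed.

Lemma funext3 (F F' : A -> B -> C -> E) :
  (forall a b c, F a b c = F' a b c) -> F = F'.
Proof. by move=> FF'; do 3!apply: functional_extensionality => ?. Qed.

Lemma funext4 (F F' : A -> B -> C -> D -> E) :
  (forall a b c d, F a b c d = F' a b c d) -> F = F'.
Proof. by move=> FF'; do 4!apply: functional_extensionality => ?. Qed.

End Funext.

Section BigSums.
Variable V : nmodType.

Lemma sum_only1 (T : finType) (a : T) (F : T -> V) :
  (forall t, t != a -> F t = 0) -> \sum_t F t = F a.
Proof. by move=> F0; apply: big_only1 => // t /F0. Qed.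

Lemma sum_pair (X G : finType) (F : X * G -> V) :
  \sum_p F p = \sum_x \sum_g F (x, g).
Proof. by rewrite pair_bigA; apply: eq_bigr => -[]. Qed.

Lemma exchange_big3 (A B C : finType) (F : A -> B -> C -> V) :
  \sum_a \sum_b \sum_c F a b c = \sum_c \sum_a \sum_b F a b c.
Proof. by under eq_bigr => a _ do rewrite exchange_big; rewrite exchange_big. Qed.

Lemma exchange_big4 (A B C E : finType) (F : A -> B -> C -> E -> V) :
  \sum_a \sum_b \sum_c \sum_e F a b c e = \sum_e \sum_a \sum_b \sum_c F a b c e.
Proof. by under eq_bigr => a _ do rewrite exchange_big3; rewrite exchange_big. Qed.

End BigSums.

Arguments sum_only1 {V T} a {F} _.

Section CrossedModuleAlgebra.
Variables (K : fieldType) (G X : finGroupType)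
  (act : G -> X -> X) (d : X -> G)
  (omega : X -> X -> X -> K) (gamma : G -> G -> X -> K)
  (mu : G -> X -> X -> K) (c : X -> X -> K).
Hypothesis crossedGX : crossed_module act d.
Hypothesis cocycle : quasi_abelian_3cocycle act d omega gamma mu c.
Hypothesis normalized : normalized_cocycle omega gamma mu c.

Lemma act1 x : act 1 x = x. Proof. by case: crossedGX. Qed.
Lemma actM g h x : act (g * h) x = act g (act h x).
Proof. by case: crossedGX => _ []. Qed.
Lemma actMx g x y : act g (x * y) = (act g x * act g y)%g.
Proof. by case: crossedGX => _ [_ []]. Qed.
Lemma dM x y : d (x * y) = (d x * d y)%g.
Proof. by case: crossedGX => _ [_ [_ []]]. Qed.
Lemma act_d x y : act (d x) y = (x * y * x^-1)%g.
Proof. by case: crossedGX => _ [_ [_ [_ []]]]. Qed.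
Lemma d_act g x : d (act g x) = (g * d x * g^-1)%g.
Proof. by case: crossedGX => _ [_ [_ [_ []]]]. Qed.

Lemma actx1 g : act g 1 = 1%g.
Proof. by apply: (mulgI (act g 1)); rewrite -actMx !mulg1. Qed.
Lemma actV g x : act g x^-1 = (act g x)^-1%g.
Proof. by apply: (mulgI (act g x)); rewrite -actMx !mulgV actx1. Qed.
Lemma actK g : cancel (act g) (act g^-1).
Proof. by move=> x; rewrite -actM mulVg act1. Qed.
Lemma d1 : d 1 = 1%g.
Proof. by apply: (mulgI (d 1)); rewrite -dM !mulg1. Qed.
Lemma dV x : d x^-1 = (d x)^-1%g.
Proof. by apply: (mulgI (d x)); rewrite -dM !mulgV d1. Qed.
Lemma act_dV x y : act (d x)^-1 y = (x^-1 * y * x)%g.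
Proof. by rewrite -dV act_d invgK. Qed.

Lemma omega_nz x y z : omega x y z != 0. Proof. by case: cocycle. Qed.
Lemma gamma_nz g h x : gamma g h x != 0. Proof. by case: cocycle => _ []. Qed.
Lemma mu_nz g x y : mu g x y != 0. Proof. by case: cocycle => _ [_ []]. Qed.
Lemma c_nz x y : c x y != 0. Proof. by case: cocycle => _ [_ [_ []]]. Qed.

Lemma omega_cocycle w x y z :
  omega x y z * omega w (x * y) z * omega w x y
  = omega w x (y * z) * omega (w * x)%g y z.
Proof. by case: cocycle => _ [_ [_ [_ []]]]. Qed.

Lemma gamma_cocycle g h k x :
  gamma h k x * gamma g (h * k) x = gamma (g * h)%g k x * gamma g h (act k x).
Proof. by case: cocycle => _ [_ [_ [_ [_ []]]]]. Qed.

(* Conditions (c), (d), (e), solved for the term carrying the action. *)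
Lemma omega_act g x y z :
  omega (act g x) (act g y) (act g z)
  = mu g y z * mu g x (y * z) / (mu g (x * y) z * mu g x y) * omega x y z.
Proof.
case: cocycle => _ [_ [_ [_ [_ [_ [E _]]]]]].
by apply: (canRL (divfK (omega_nz x y z))); rewrite E.
Qed.

Lemma mu_act g h x y :
  mu g (act h x) (act h y)
  = gamma g h x * gamma g h y / gamma g h (x * y) * mu (g * h)%g x y / mu h x y.
Proof.
case: cocycle => _ [_ [_ [_ [_ [_ [_ [E _]]]]]]].
apply: (canRL (mulfK (mu_nz h x y))); apply: (canRL (divfK (mu_nz (g * h) x y))).
by rewrite E.
Qed.

Lemma c_act g x y :
  c (act g x) (act g y)
  = mu g (x * y * x^-1) x / mu g x y *
    (gamma (g * d x * g^-1) g y / gamma g (d x) y) * c x y.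
Proof.
case: cocycle => _ [_ [_ [_ [_ [_ [_ [_ [E _]]]]]]]].
by apply: (canRL (divfK (c_nz x y))); rewrite E.
Qed.

Lemma c_mull x y z :
  c (x * y) z
  = omega x y z * omega ((x * y) * z * (x * y)^-1) x y /
    (omega x (y * z * y^-1) y * gamma (d x) (d y) z) *
    c x (y * z * y^-1) * c y z.
Proof. by case: cocycle => _ [_ [_ [_ [_ [_ [_ [_ [_ []]]]]]]]]. Qed.

Lemma c_mulr x y z :
  c x (y * z)
  = omega (x * y * x^-1) x z /
    (omega x y z * omega (x * y * x^-1) (x * z * x^-1) x * mu (d x) y z) *
    c x y * c x z.
Proof. by case: cocycle => _ [_ [_ [_ [_ [_ [_ [_ [_ []]]]]]]]]. Qed.

Lemma omega1l y z : omega 1 y z = 1.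
Proof. by case: normalized => N _; apply: N; rewrite eqxx. Qed.
Lemma omega1m x z : omega x 1 z = 1.
Proof. by case: normalized => N _; apply: N; rewrite eqxx orbT. Qed.
Lemma omega1r x y : omega x y 1 = 1.
Proof. by case: normalized => N _; apply: N; rewrite eqxx !orbT. Qed.
Lemma gamma1l h x : gamma 1 h x = 1.
Proof. by case: normalized => _ [N _]; apply: N; rewrite eqxx. Qed.
Lemma gamma1m g x : gamma g 1 x = 1.
Proof. by case: normalized => _ [N _]; apply: N; rewrite eqxx orbT. Qed.
Lemma gamma1r g h : gamma g h 1 = 1.
Proof. by case: normalized => _ [N _]; apply: N; rewrite eqxx !orbT. Qed.
Lemma mu1l x y : mu 1 x y = 1.
Proof. by case: normalized => _ [_ [N _]]; apply: N; rewrite eqxx. Qed.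
Lemma mu1m g y : mu g 1 y = 1.
Proof. by case: normalized => _ [_ [N _]]; apply: N; rewrite eqxx orbT. Qed.
Lemma mu1r g x : mu g x 1 = 1.
Proof. by case: normalized => _ [_ [N _]]; apply: N; rewrite eqxx !orbT. Qed.

Lemma gammaV g y : gamma g g^-1 (act g y) = gamma g^-1 g y.
Proof.
by have := gamma_cocycle g g^-1 g y; rewrite mulVg mulgV gamma1m gamma1l mulr1 mul1r.
Qed.

Lemma omegaV z : omega z z^-1 z * omega z^-1 z z^-1 = 1.
Proof.
have := omega_cocycle z z^-1 z z^-1.
by rewrite mulVg mulgV omega1m omega1r omega1l mulr1 mul1r mulrC.
Qed.

Local Notation B := (X * G)%type.
Local Notation m := (Hm act gamma).
Local Notation u := (@Hu K G X).

(* [t_p t_q] has a component along [t_r] only for [q = ridx h r] and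
   [p = lidx h r], where [h = q.2]; [mulc h r] is that component. *)
Definition lidx (h : G) (r : B) : B := (act h r.1, r.2 * h^-1)%g.
Definition ridx (h : G) (r : B) : B := (r.1, h).
Definition mulc (h : G) (r : B) : K := (gamma (r.2 * h^-1) h r.1)^-1.

Lemma HmE p q r : m p q r =
  if p == (act q.2 q.1, r.2 * q.2^-1)%g then
    (if r.1 == q.1 then (gamma p.2 q.2 q.1)^-1 else 0) else 0.
Proof.
case: p q r => [x g] [y h] [z k]; rewrite /Hm /= xpair_eqE.
rewrite (eq_sym g) divg_eq.
by case: (x == _); case: (z == _); case: (k == _).
Qed.

Lemma sum_Hm (F : B -> B -> K) r :
  \sum_p \sum_q F p q * m p q r = \sum_h F (lidx h r) (ridx h r) * mulc h r.
Proof.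
rewrite exchange_big /=.
rewrite (eq_bigr (fun q => F (act q.2 q.1, r.2 * q.2^-1)%g q *
        (if r.1 == q.1 then (gamma (r.2 * q.2^-1) q.2 q.1)^-1 else 0))); last first.
  move=> q _; rewrite (sum_only1 (act q.2 q.1, r.2 * q.2^-1)%g) => [|p ne_p].
    by rewrite HmE eqxx.
  by rewrite HmE (negbTE ne_p) mulr0.
rewrite sum_pair exchange_big /=; apply: eq_bigr => h _.
rewrite (sum_only1 r.1) ?eqxx // => y ne_y.
by rewrite eq_sym (negbTE ne_y) mulr0.
Qed.

Lemma mulHE f g r : mulH m f g r = \sum_h f (lidx h r) * g (ridx h r) * mulc h r.
Proof.
rewrite /mulH -(sum_Hm (fun p q => f p * g q)).
by apply: eq_bigr => p _; apply: eq_bigr.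
Qed.

Lemma mul2E F F' r1 r2 : mul2 m F F' r1 r2 =
  \sum_h1 \sum_h2 F (lidx h1 r1) (lidx h2 r2) * F' (ridx h1 r1) (ridx h2 r2)
     * mulc h1 r1 * mulc h2 r2.
Proof.
rewrite /mul2.
transitivity (\sum_p1 \sum_q1 (\sum_p2 \sum_q2
    F p1 p2 * F' q1 q2 * m p2 q2 r2) * m p1 q1 r1).
  apply: eq_bigr => p1 _; rewrite exchange_big; apply: eq_bigr => q1 _.
  rewrite big_distrl; apply: eq_bigr => p2 _; rewrite big_distrl.
  by apply: eq_bigr => q2 _; rewrite mulrAC.
rewrite sum_Hm; apply: eq_bigr => h1 _.
rewrite sum_Hm big_distrl; apply: eq_bigr => h2 _.
by rewrite [RHS]mulrAC.
Qed.

Lemma mul3E F F' r1 r2 r3 : mul3 m F F' r1 r2 r3 =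
  \sum_h1 \sum_h2 \sum_h3 F (lidx h1 r1) (lidx h2 r2) (lidx h3 r3) *
     F' (ridx h1 r1) (ridx h2 r2) (ridx h3 r3) *
     mulc h1 r1 * mulc h2 r2 * mulc h3 r3.
Proof.
have perm3 (a x y z : K) : a * x * y * z = a * z * y * x by ring.
rewrite /mul3.
transitivity (\sum_p1 \sum_q1 (\sum_p2 \sum_q2 (\sum_p3 \sum_q3
    F p1 p2 p3 * F' q1 q2 q3 * m p3 q3 r3) * m p2 q2 r2) * m p1 q1 r1).
  apply: eq_bigr => p1 _; rewrite exchange_big3; apply: eq_bigr => q1 _.
  rewrite big_distrl; apply: eq_bigr => p2 _; rewrite exchange_big [RHS]big_distrl.
  apply: eq_bigr => q2 _; rewrite !big_distrl; apply: eq_bigr => p3 _.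
  by rewrite !big_distrl; apply: eq_bigr => q3 _; exact: perm3.
rewrite sum_Hm; apply: eq_bigr => h1 _.
rewrite sum_Hm big_distrl; apply: eq_bigr => h2 _.
by rewrite sum_Hm !big_distrl; apply: eq_bigr => h3 _; exact: perm3.
Qed.

Lemma mul4E F F' r1 r2 r3 r4 : mul4 m F F' r1 r2 r3 r4 =
  \sum_h1 \sum_h2 \sum_h3 \sum_h4
     F (lidx h1 r1) (lidx h2 r2) (lidx h3 r3) (lidx h4 r4) *
     F' (ridx h1 r1) (ridx h2 r2) (ridx h3 r3) (ridx h4 r4) *
     mulc h1 r1 * mulc h2 r2 * mulc h3 r3 * mulc h4 r4.
Proof.
have perm4 (a x y z w : K) : a * x * y * z * w = a * w * z * y * x by ring.
rewrite /mul4.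
transitivity (\sum_p1 \sum_q1 (\sum_p2 \sum_q2 (\sum_p3 \sum_q3 (\sum_p4 \sum_q4
    F p1 p2 p3 p4 * F' q1 q2 q3 q4 * m p4 q4 r4) * m p3 q3 r3)
       * m p2 q2 r2) * m p1 q1 r1).
  apply: eq_bigr => p1 _; rewrite exchange_big4; apply: eq_bigr => q1 _.
  rewrite big_distrl; apply: eq_bigr => p2 _; rewrite exchange_big3 [RHS]big_distrl.
  apply: eq_bigr => q2 _; rewrite !big_distrl; apply: eq_bigr => p3 _.
  rewrite exchange_big !big_distrl; apply: eq_bigr => q3 _.
  rewrite !big_distrl; apply: eq_bigr => p4 _.
  by rewrite !big_distrl; apply: eq_bigr => q4 _; exact: perm4.
rewrite sum_Hm; apply: eq_bigr => h1 _.
rewrite sum_Hm big_distrl; apply: eq_bigr => h2 _.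
rewrite sum_Hm !big_distrl; apply: eq_bigr => h3 _.
by rewrite sum_Hm !big_distrl; apply: eq_bigr => h4 _; exact: perm4.
Qed.

Lemma lidx1 r : lidx 1 r = r.
Proof. by case: r => x g; rewrite /lidx /= act1 invg1 mulg1. Qed.
Lemma mulc1 r : mulc 1 r = 1.
Proof. by rewrite /mulc gamma1m invr1. Qed.
Lemma ridx_id r : ridx r.2 r = r. Proof. by case: r. Qed.
Lemma lidx_id r : lidx r.2 r = (act r.2 r.1, 1%g). Proof. by rewrite /lidx mulgV. Qed.
Lemma mulc_id r : mulc r.2 r = 1. Proof. by rewrite /mulc mulgV gamma1l invr1. Qed.

Lemma lidxM h h' r : lidx (h' * h^-1) (lidx h r) = lidx h' r.
Proof. by rewrite /lidx /= -actM mulgVK invgM invgK mulgA mulgVK. Qed.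

Lemma mulc_assoc h h' r :
  mulc (h' * h^-1) (lidx h r) * mulc h r = mulc h (ridx h' r) * mulc h' r.
Proof.
rewrite /mulc /= -!invfM; congr (_^-1).
have := gamma_cocycle (r.2 * h'^-1) (h' * h^-1) h r.1.
rewrite mulgVK !mulgA mulgVK invgM invgK mulgA mulgVK => ->.
by rewrite mulrC.
Qed.

Lemma mulHA f g h : mulH m (mulH m f g) h = mulH m f (mulH m g h).
Proof.
apply: functional_extensionality => r; rewrite !mulHE.
under [RHS]eq_bigr => h' _ do rewrite mulHE mulr_sumr mulr_suml.
rewrite [RHS]exchange_big /=; apply: eq_bigr => h2 _.
rewrite mulHE !mulr_suml (reindex_inj (mulIg h2^-1)%g); apply: eq_bigr => h' _.
rewrite lidxM [in LHS]mulrAC -[in LHS](mulrA _ (mulc (h' * h2^-1) _)).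
by rewrite mulc_assoc /ridx /lidx /=; ring.
Qed.

Lemma mulH1 f : mulH m f u = f.
Proof.
apply: functional_extensionality => r; rewrite mulHE (sum_only1 1%g) => [|h h1].
  by rewrite lidx1 mulc1 /Hu /= eqxx !mulr1.
by rewrite /Hu /= (negbTE h1) mulr0 mul0r.
Qed.

Lemma mul1H f : mulH m u f = f.
Proof.
apply: functional_extensionality => r; rewrite mulHE (sum_only1 r.2) => [|h hr].
  by rewrite lidx_id ridx_id mulc_id /Hu /= eqxx mul1r mulr1.
by rewrite /Hu /= divg_eq1 eq_sym (negbTE hr) !mul0r.
Qed.

Lemma H_assoc_algebra : is_assoc_algebra m u.
Proof. by split; [exact: mulHA | split; [exact: mul1H | exact: mulH1]]. Qed.

Local Notation dl := (Hdl mu).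
Local Notation e := (@He K G X).
Local Notation Phi := (HPhi omega).

(* Case on [g == o]: substitute in the first branch, rewrite [g == o] and
   [o == g] to [false] in the second. *)
Ltac split_eq g o := let eq_g := fresh "eq_g" in let ne_g := fresh "ne_g" in
  have [eq_g|/negbTE ne_g] := eqVneq g o;
    [rewrite ?eq_g | rewrite ?ne_g ?[o == g]eq_sym ?ne_g].
Ltac split1 g := let eq_g := fresh "eq_g" in let ne_g := fresh "ne_g" in
  have [eq_g|/negbTE ne_g] := eqVneq g 1%g;
    [rewrite ?eq_g | rewrite ?ne_g ?[1%g == g]eq_sym ?ne_g].

Lemma DeltaE f q r : DeltaH dl f q r =
  if r.2 == q.2 then f (q.1 * r.1, q.2)%g * mu q.2 q.1 r.1 else 0.
Proof.
rewrite /DeltaH (sum_only1 (q.1 * r.1, q.2)%g).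
  by rewrite /Hdl /= !eqxx /= andbT; case: ifP; rewrite ?mulr0.
move=> -[x g] ne; rewrite /Hdl /=.
case: ifP => [/and3P [/eqP e1 _ /eqP e3]|]; last by rewrite mulr0.
by move: ne; rewrite e1 e3 eqxx.
Qed.

Lemma id_DE F s1 s2 s3 : id_D dl F s1 s2 s3 =
  if s3.2 == s2.2 then F s1 (s2.1 * s3.1, s2.2)%g * mu s2.2 s2.1 s3.1 else 0.
Proof. exact: (DeltaE (F s1) s2 s3). Qed.
Lemma D_idE F s1 s2 s3 : D_id dl F s1 s2 s3 =
  if s2.2 == s1.2 then F (s1.1 * s2.1, s1.2)%g s3 * mu s1.2 s1.1 s2.1 else 0.
Proof. exact: (DeltaE (fun p => F p s3) s1 s2). Qed.
Lemma id_id_DE F s1 s2 s3 s4 : id_id_D dl F s1 s2 s3 s4 =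
  if s4.2 == s3.2 then F s1 s2 (s3.1 * s4.1, s3.2)%g * mu s3.2 s3.1 s4.1 else 0.
Proof. exact: (DeltaE (F s1 s2) s3 s4). Qed.
Lemma id_D_idE F s1 s2 s3 s4 : id_D_id dl F s1 s2 s3 s4 =
  if s3.2 == s2.2 then F s1 (s2.1 * s3.1, s2.2)%g s4 * mu s2.2 s2.1 s3.1 else 0.
Proof. exact: (DeltaE (fun p => F s1 p s4) s2 s3). Qed.
Lemma D_id_idE F s1 s2 s3 s4 : D_id_id dl F s1 s2 s3 s4 =
  if s2.2 == s1.2 then F (s1.1 * s2.1, s1.2)%g s3 s4 * mu s1.2 s1.1 s2.1 else 0.
Proof. exact: (DeltaE (fun p => F p s3 s4) s1 s2). Qed.

Lemma epsE f : epsH e f = \sum_g f (1%g, g).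
Proof.
rewrite /epsH sum_pair (sum_only1 1%g) => [|x x1].
  by apply: eq_bigr => g _; rewrite /He /= eqxx mulr1.
by apply: big1 => g _; rewrite /He /= (negbTE x1) mulr0.
Qed.

Lemma Delta_mul f g : DeltaH dl (mulH m f g) = mul2 m (DeltaH dl f) (DeltaH dl g).
Proof.
apply: funext2 => q r.
rewrite mul2E DeltaE.
rewrite (eq_bigr (fun h1 => DeltaH dl f (lidx h1 q) (lidx h1 r) *
   DeltaH dl g (ridx h1 q) (ridx h1 r) * mulc h1 q * mulc h1 r)); last first.
  move=> h1 _; rewrite (sum_only1 h1) // => h2 ne.
  by rewrite [DeltaH _ g _ _]DeltaE /= (negbTE ne) mulr0 !mul0r.
have [er | ne] := eqVneq r.2 q.2; last first.
  apply/esym/big1 => h _; rewrite DeltaE /= (inj_eq (mulIg _)).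
  by rewrite (negbTE ne) !mul0r.
rewrite mulHE mulr_suml; apply: eq_bigr => h _.
rewrite !DeltaE /= er !eqxx /lidx /ridx /mulc /= actMx er mu_act mulgVK.
by field; rewrite !gamma_nz !mu_nz.
Qed.

Lemma Delta_one : DeltaH dl u = one2 u.
Proof.
apply: funext2 => q r.
rewrite DeltaE /one2 /Hu; case: q r => [x g] [y h] /=.
by split1 g; split1 h; rewrite ?eqxx ?mu1l ?mulr1 ?mul0r ?mulr0 ?if_same.
Qed.

Lemma eps_mul f g : epsH e (mulH m f g) = epsH e f * epsH e g.
Proof.
rewrite !epsE mulr_sumr.
under eq_bigr => k _ do rewrite mulHE.
rewrite exchange_big /=; apply: eq_bigr => h _.
rewrite mulr_suml (reindex_inj (mulIg h)); apply: eq_bigr => k _.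
by rewrite /lidx /ridx /mulc /= actx1 mulgK gamma1r invr1 mulr1.
Qed.

Lemma eps_one : epsH e u = 1.
Proof.
rewrite epsE (sum_only1 1%g) => [|g g1]; first by rewrite /Hu eqxx.
by rewrite /Hu /= (negbTE g1).
Qed.

Lemma eps_Delta f : eps_id e (DeltaH dl f) = f.
Proof.
apply: functional_extensionality => q.
rewrite -[LHS]/(epsH e (DeltaH dl f ^~ q)) epsE (sum_only1 q.2).
  by rewrite DeltaE /= eqxx mul1g mu1m mulr1; case: q.
by move=> g ne; rewrite DeltaE /= eq_sym (negbTE ne).
Qed.

Lemma Delta_eps f : id_eps e (DeltaH dl f) = f.
Proof.
apply: functional_extensionality => p.
rewrite -[LHS]/(epsH e (DeltaH dl f p)) epsE (sum_only1 p.2).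
  by rewrite DeltaE /= eqxx mulg1 mu1r mulr1; case: p.
by move=> g ne; rewrite DeltaE /= (negbTE ne).
Qed.

Definition deg1_support3 (F : B -> B -> B -> K) :=
  forall p q r, F p q r != 0 -> [&& p.2 == 1%g, q.2 == 1%g & r.2 == 1%g].
Definition deg1_support4 (F : B -> B -> B -> B -> K) :=
  forall p q r s, F p q r s != 0 ->
    [&& p.2 == 1%g, q.2 == 1%g, r.2 == 1%g & s.2 == 1%g].

Lemma mul3_deg1r F F' r1 r2 r3 : deg1_support3 F' ->
  mul3 m F F' r1 r2 r3 = F r1 r2 r3 * F' (r1.1, 1%g) (r2.1, 1%g) (r3.1, 1%g).
Proof.
move=> F'1; rewrite mul3E.
have F'0 h1 h2 h3 : ~~ [&& h1 == 1%g, h2 == 1%g & h3 == 1%g] ->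
    F' (ridx h1 r1) (ridx h2 r2) (ridx h3 r3) = 0.
  by move=> nh; apply/eqP; apply: contraNT nh => /F'1.
rewrite (sum_only1 1%g) => [|h1 n1]; last first.
  apply: big1 => h2 _; apply: big1 => h3 _.
  by rewrite F'0 ?(negbTE n1) // !(mulr0, mul0r).
rewrite (sum_only1 1%g) => [|h2 n2]; last first.
  by apply: big1 => h3 _; rewrite F'0 ?(negbTE n2) ?andbF // !(mulr0, mul0r).
rewrite (sum_only1 1%g) => [|h3 n3]; last first.
  by rewrite F'0 ?(negbTE n3) ?andbF // !(mulr0, mul0r).
by rewrite !lidx1 !mulc1 !mulr1.
Qed.

Lemma mul3_deg1l F F' r1 r2 r3 : deg1_support3 F ->
  mul3 m F F' r1 r2 r3 =
  F (act r1.2 r1.1, 1%g) (act r2.2 r2.1, 1%g) (act r3.2 r3.1, 1%g) * F' r1 r2 r3.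
Proof.
move=> F1; rewrite mul3E.
have F0 h1 h2 h3 : ~~ [&& h1 == r1.2, h2 == r2.2 & h3 == r3.2] ->
    F (lidx h1 r1) (lidx h2 r2) (lidx h3 r3) = 0.
  move=> nh; apply/eqP; apply: contraNT nh => /F1.
  by rewrite /= !divg_eq1 ![r1.2 == _]eq_sym ![r2.2 == _]eq_sym ![r3.2 == _]eq_sym.
rewrite (sum_only1 r1.2) => [|h1 n1]; last first.
  apply: big1 => h2 _; apply: big1 => h3 _.
  by rewrite F0 ?(negbTE n1) // !(mulr0, mul0r).
rewrite (sum_only1 r2.2) => [|h2 n2]; last first.
  by apply: big1 => h3 _; rewrite F0 ?(negbTE n2) ?andbF // !(mulr0, mul0r).
rewrite (sum_only1 r3.2) => [|h3 n3]; last first.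
  by rewrite F0 ?(negbTE n3) ?andbF // !(mulr0, mul0r).
by rewrite !lidx_id !ridx_id !mulc_id !mulr1.
Qed.

Lemma mul4_deg1r F F' r1 r2 r3 r4 : deg1_support4 F' ->
  mul4 m F F' r1 r2 r3 r4 =
  F r1 r2 r3 r4 * F' (r1.1, 1%g) (r2.1, 1%g) (r3.1, 1%g) (r4.1, 1%g).
Proof.
move=> F'1; rewrite mul4E.
have F'0 h1 h2 h3 h4 : ~~ [&& h1 == 1%g, h2 == 1%g, h3 == 1%g & h4 == 1%g] ->
    F' (ridx h1 r1) (ridx h2 r2) (ridx h3 r3) (ridx h4 r4) = 0.
  by move=> nh; apply/eqP; apply: contraNT nh => /F'1.
rewrite (sum_only1 1%g) => [|h1 n1]; last first.
  apply: big1 => h2 _; apply: big1 => h3 _; apply: big1 => h4 _.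
  by rewrite F'0 ?(negbTE n1) // !(mulr0, mul0r).
rewrite (sum_only1 1%g) => [|h2 n2]; last first.
  apply: big1 => h3 _; apply: big1 => h4 _.
  by rewrite F'0 ?(negbTE n2) ?andbF // !(mulr0, mul0r).
rewrite (sum_only1 1%g) => [|h3 n3]; last first.
  by apply: big1 => h4 _; rewrite F'0 ?(negbTE n3) ?andbF // !(mulr0, mul0r).
rewrite (sum_only1 1%g) => [|h4 n4]; last first.
  by rewrite F'0 ?(negbTE n4) ?andbF // !(mulr0, mul0r).
by rewrite !lidx1 !mulc1 !mulr1.
Qed.

Lemma deg1_HPhi (w : X -> X -> X -> K) : deg1_support3 (HPhi w).
Proof. by move=> p q r; rewrite /HPhi; case: ifP => //; rewrite eqxx. Qed.

Lemma mul3_HPhi (w w' : X -> X -> X -> K) :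
  mul3 m (HPhi w) (HPhi w') = HPhi (fun x y z => w x y z * w' x y z).
Proof.
apply: funext3 => r1 r2 r3.
rewrite mul3_deg1r; last exact: deg1_HPhi.
by rewrite /HPhi /= !eqxx; case: ifP; rewrite ?mul0r.
Qed.

Lemma HPhi1 : HPhi (fun _ _ _ => 1) = one3 u.
Proof.
apply: funext3 => r1 r2 r3.
rewrite /HPhi /one3 /Hu.
by case: (r1.2 == 1%g); case: (r2.2 == 1%g); case: (r3.2 == 1%g);
  rewrite ?mulr0 ?mul0r ?mulr1.
Qed.

Definition Phii : B -> B -> B -> K := HPhi (fun x y z => (omega x y z)^-1).

Lemma Phi_Phii : mul3 m Phi Phii = one3 u.
Proof.
rewrite mul3_HPhi -HPhi1; congr HPhi.
by apply: funext3 => x y z; rewrite mulfV ?omega_nz.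
Qed.

Lemma Phii_Phi : mul3 m Phii Phi = one3 u.
Proof.
rewrite mul3_HPhi -HPhi1; congr HPhi.
by apply: funext3 => x y z; rewrite mulVf ?omega_nz.
Qed.

Lemma quasi_coassoc f :
  id_D dl (DeltaH dl f) = mul3 m (mul3 m Phi (D_id dl (DeltaH dl f))) Phii.
Proof.
apply: funext3 => r1 r2 r3.
rewrite mul3_deg1r; last exact: deg1_HPhi.
rewrite mul3_deg1l; last exact: deg1_HPhi.
rewrite id_DE D_idE !DeltaE /Phii /HPhi /= !eqxx /=.
case: r1 r2 r3 => [a g] [b g2] [z g3] /=.
split_eq g2 g; split_eq g3 g; rewrite ?eqxx /= ?(mul0r, mulr0) ?if_same //.
by rewrite omega_act mulgA; field; rewrite !mu_nz !omega_nz.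
Qed.

Definition HPhi4 (w : X -> X -> X -> X -> K) (s1 s2 s3 s4 : B) : K :=
  if [&& s1.2 == 1%g, s2.2 == 1%g, s3.2 == 1%g & s4.2 == 1%g]
  then w s1.1 s2.1 s3.1 s4.1 else 0.

Lemma deg1_HPhi4 w : deg1_support4 (HPhi4 w).
Proof. by move=> p q r s; rewrite /HPhi4; case: ifP => //; rewrite eqxx. Qed.

Lemma mul4_HPhi4 w w' :
  mul4 m (HPhi4 w) (HPhi4 w') = HPhi4 (fun x1 x2 x3 x4 => w x1 x2 x3 x4 * w' x1 x2 x3 x4).
Proof.
apply: funext4 => s1 s2 s3 s4.
rewrite mul4_deg1r; last exact: deg1_HPhi4.
by rewrite /HPhi4 /= !eqxx; case: ifP; rewrite ?mul0r.
Qed.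

Lemma Phi_legs :
  [/\ id_id_D dl Phi = HPhi4 (fun x1 x2 x3 x4 => omega x1 x2 (x3 * x4)),
      id_D_id dl Phi = HPhi4 (fun x1 x2 x3 x4 => omega x1 (x2 * x3) x4),
      D_id_id dl Phi = HPhi4 (fun x1 x2 x3 x4 => omega (x1 * x2) x3 x4),
      one_tensor u Phi = HPhi4 (fun _ x2 x3 x4 => omega x2 x3 x4) &
      tensor_one u Phi = HPhi4 (fun x1 x2 x3 _ => omega x1 x2 x3)].
Proof.
split; apply: funext4 => -[x1 g1] [x2 g2] [x3 g3] [x4 g4];
  rewrite ?id_id_DE ?id_D_idE ?D_id_idE /one_tensor /tensor_one /HPhi4 /HPhi /Hu /=;
  split1 g1; split1 g2; split1 g3; split1 g4;
  by rewrite /= ?eqxx ?mu1l ?(mulr1, mul1r, mulr0, mul0r) ?if_same.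
Qed.

Lemma pentagon : mul4 m (id_id_D dl Phi) (D_id_id dl Phi) =
  mul4 m (mul4 m (one_tensor u Phi) (id_D_id dl Phi)) (tensor_one u Phi).
Proof.
have [-> -> -> -> ->] := Phi_legs.
rewrite !mul4_HPhi4; congr HPhi4.
by apply: funext4 => x1 x2 x3 x4; rewrite omega_cocycle.
Qed.

Lemma Phi_counit : id_eps_id e Phi = one2 u.
Proof.
apply: funext2 => p r; rewrite -[LHS]/(epsH e (Phi p ^~ r)) epsE (sum_only1 1%g).
  rewrite /HPhi /one2 /Hu /= eqxx omega1m.
  by case: (p.2 == 1%g); case: (r.2 == 1%g); rewrite ?mulr0 ?mul0r ?mulr1.
by move=> g g1; rewrite /HPhi /= (negbTE g1) andbF.
Qed.

Lemma H_quasi_bialgebra : quasi_bialgebra_ax m u dl e Phi Phii.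
Proof.
split; first exact: Delta_mul.
split; first exact: Delta_one.
split; first exact: eps_mul.
split; first exact: eps_one.
split; first exact: Phi_Phii.
split; first exact: Phii_Phi.
split; first exact: quasi_coassoc.
split; first exact: pentagon.
by split; [exact: eps_Delta | split; [exact: Delta_eps | exact: Phi_counit]].
Qed.

Local Notation Sm := (HS act gamma mu).

Definition Sidx (p : B) : B := (act p.2 p.1^-1, p.2^-1)%g.
Definition Scoef (p : B) : K :=
  gamma p.2^-1 p.2 p.1^-1 / mu p.2 p.1 p.1^-1.

Lemma SidxK : involutive Sidx.
Proof. by case=> x g; rewrite /Sidx /= invgK -actV invgK actK. Qed.

Lemma Scoef_nz p : Scoef p != 0.
Proof. by rewrite /Scoef mulf_neq0 ?invr_eq0 ?gamma_nz ?mu_nz. Qed.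

Lemma HSE p q : Sm p q = if q == Sidx p then Scoef p else 0.
Proof. by case: p q => [x g] [y h]; rewrite /HS /Sidx /= xpair_eqE. Qed.

Lemma SHE f q : SH Sm f q = f (Sidx q) * Scoef (Sidx q).
Proof.
rewrite /SH (sum_only1 (Sidx q)) => [|p ne]; first by rewrite HSE SidxK eqxx.
rewrite HSE; case: eqP => [qp|]; last by rewrite mulr0.
by rewrite qp SidxK eqxx in ne.
Qed.

Lemma SH_bij : bijective (SH Sm).
Proof.
exists (fun f q => f (Sidx q) / Scoef q) => f; apply: functional_extensionality => q.
  by rewrite SHE SidxK mulfK ?Scoef_nz.
by rewrite SHE SidxK divfK ?Scoef_nz.
Qed.

Lemma Scoef_mul x a h :
  Scoef (x, a * h)%g * gamma h^-1 a^-1 (act (a * h) x^-1)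
  = Scoef (x, h) * Scoef (act h x, a) * gamma a h x.
Proof.
have := gamma_cocycle (h^-1 * a^-1) a h x^-1.
rewrite mulgKV -invgM => /(canRL (mulKf (gamma_nz a h x^-1))) b1.
have := gamma_cocycle h^-1 a^-1 a (act h x^-1).
rewrite mulVg gamma1m mulr1 -actM -invgM => b2.
rewrite /Scoef /= b1 -actV b2 mu_act mulgV gamma1r divr1.
by field; rewrite !gamma_nz !mu_nz.
Qed.

Lemma Scoef_mulc h q : mulc h (Sidx q) * Scoef (Sidx q) =
  Scoef (ridx h (Sidx q)) * Scoef (lidx h (Sidx q)) * mulc (h * q.2)%g q.
Proof.
case: q => y k; rewrite /mulc /Sidx /ridx /lidx /=.
have := Scoef_mul (act k y^-1) (k^-1 * h^-1) h.
rewrite mulgVK invgM !invgK -actV invgK actK invgM mulKVg.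
move=> /(canRL (mulfK (gamma_nz _ _ _))) ->.
by field; rewrite !gamma_nz.
Qed.

Lemma Sidx_lidx h q : Sidx (lidx (h * q.2) q) = ridx h (Sidx q).
Proof.
case: q => y k; rewrite /Sidx /lidx /ridx /= invgM mulKVg invgK actM -actV actK.
by rewrite actV.
Qed.

Lemma Sidx_ridx h q : Sidx (ridx (h * q.2) q) = lidx h (Sidx q).
Proof. by case: q => y k; rewrite /Sidx /lidx /ridx /= invgM actM. Qed.

Lemma SH_mul f g : SH Sm (mulH m f g) = mulH m (SH Sm g) (SH Sm f).
Proof.
apply: functional_extensionality => q.
rewrite SHE mulHE mulr_suml [RHS]mulHE [RHS](reindex_inj (mulIg q.2)).
apply: eq_bigr => h _; rewrite !SHE Sidx_lidx Sidx_ridx -mulrA Scoef_mulc; ring.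
Qed.

Lemma SH_one : SH Sm u = u.
Proof.
apply: functional_extensionality => -[y k].
rewrite SHE /Hu /Sidx /Scoef /= invg_eq1.
case: eqP => [->|]; last by rewrite mul0r.
by rewrite !invg1 gamma1l mu1l divr1 mulr1.
Qed.

Local Notation dlt := (@dlt K B).
Local Notation beta := (Hbeta omega).
Local Notation alpha := (@Halpha K G X).

Lemma SH_dlt q p : SH Sm (dlt q) p = if Sidx p == q then Scoef (Sidx p) else 0.
Proof. by rewrite SHE /dlt; case: (Sidx p == q); rewrite ?mul1r ?mul0r. Qed.

Lemma SH_dlt1 x : SH Sm (dlt (x, 1%g)) = dlt (x^-1, 1)%g.
Proof.
apply: functional_extensionality => p; rewrite SH_dlt /dlt -(can_eq SidxK) SidxK.
rewrite /Sidx /Scoef /= act1 invg1.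
by case: eqP => [->|//]; rewrite /= !invg1 gamma1l mu1l divr1 ?eqxx.
Qed.

Lemma mulH_dlt F q r : mulH m F (dlt q) r =
  if r.1 == q.1 then F (lidx q.2 r) * mulc q.2 r else 0.
Proof.
rewrite mulHE (sum_only1 q.2) => [|h ne].
  case: q r => [y h] [z k]; rewrite /dlt /ridx /= xpair_eqE eqxx andbT.
  by case: (z == y); rewrite ?mulr1 ?mulr0 ?mul0r.
case: q ne => y g ne; rewrite /dlt /ridx /= xpair_eqE.
by rewrite (negbTE ne) andbF mulr0 mul0r.
Qed.

Lemma mulH_dlt1 F x r : mulH m F (dlt (x, 1%g)) r = if r.1 == x then F r else 0.
Proof. by rewrite mulH_dlt /= lidx1 mulc1 mulr1. Qed.

Lemma mulH_beta F p : mulH m F beta p = F p * omega p.1^-1 p.1 p.1^-1.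
Proof.
rewrite mulHE (sum_only1 1%g) => [|h ne].
  by rewrite lidx1 mulc1 /Hbeta /= eqxx mulr1.
by rewrite /Hbeta /= (negbTE ne) mulr0 mul0r.
Qed.

Lemma antipode_alpha f :
  (fun r => \sum_q1 \sum_q2 DeltaH dl f q1 q2 *
     mulH m (mulH m (SH Sm (dlt q1)) alpha) (dlt q2) r)
  = (fun r => epsH e f * alpha r).
Proof.
apply: functional_extensionality => r; rewrite /Halpha.
under eq_bigr => q1 _ do under eq_bigr => q2 _ do rewrite mulH1 mulH_dlt.
rewrite exchange_big /= sum_pair (sum_only1 r.1) => [|b ne]; last first.
  apply: big1 => g _; apply: big1 => q1 _.
  by rewrite /= eq_sym (negbTE ne) mulr0.
transitivity (\sum_g DeltaH dl f (Sidx (lidx g r)) (r.1, g) *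
                (Scoef (Sidx (lidx g r)) * mulc g r)).
  apply: eq_bigr => g _; rewrite /= eqxx (sum_only1 (Sidx (lidx g r))) => [|q1 ne].
    by rewrite SH_dlt eqxx.
  by rewrite SH_dlt eq_sym (negbTE ne) mul0r mulr0.
case: r => z k; rewrite /Hu /=.
have [->|nk] := eqVneq k 1%g.
  rewrite mulr1 epsE; apply: eq_bigr => g _.
  rewrite /Sidx /lidx /mulc /Scoef /= mul1g invgK -actV actK DeltaE /= eqxx mulVg invgK.
  by field; rewrite mu_nz gamma_nz.
rewrite mulr0; apply: big1 => g _; rewrite DeltaE /Sidx /lidx /=.
case: eqP; rewrite ?mul0r // invgM invgK => E.
have /eqP : (k^-1 = 1)%g by apply: (mulgI g); rewrite mulg1 -E.
by rewrite invg_eq1 (negbTE nk).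
Qed.

Lemma antipode_beta f :
  (fun r => \sum_q1 \sum_q2 DeltaH dl f q1 q2 *
     mulH m (mulH m (dlt q1) beta) (SH Sm (dlt q2)) r)
  = (fun r => epsH e f * beta r).
Proof.
apply: functional_extensionality => r.
under eq_bigr => q1 _ do under eq_bigr => q2 _ do rewrite mulHE mulr_sumr.
rewrite exchange_big3.
transitivity (\sum_h DeltaH dl f (lidx h r) (Sidx (ridx h r)) *
   (omega (lidx h r).1^-1 (lidx h r).1 (lidx h r).1^-1 *
    Scoef (Sidx (ridx h r)) * mulc h r)).
  apply: eq_bigr => h _; rewrite (sum_only1 (lidx h r)) => [|q1 ne]; last first.
    apply: big1 => q2 _; rewrite mulH_beta /dlt.
    by rewrite eq_sym (negbTE ne) !mul0r mulr0.
  rewrite (sum_only1 (Sidx (ridx h r))) => [|q2 ne]; last first.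
    by rewrite SH_dlt eq_sym (negbTE ne) mulr0 mul0r mulr0.
  by rewrite mulH_beta SH_dlt /dlt !eqxx mul1r.
case: r => z k; rewrite /Hbeta /=.
have [->|nk] := eqVneq k 1%g; last first.
  rewrite mulr0; apply: big1 => h _; rewrite DeltaE /Sidx /lidx /ridx /=.
  case: eqP; rewrite ?mul0r // => E.
  have /eqP : k = 1%g by apply: (mulIg h^-1%g); rewrite mul1g -E.
  by rewrite (negbTE nk).
rewrite epsE mulr_suml [RHS](reindex_inj invg_inj); apply: eq_bigr => h _.
rewrite /Sidx /lidx /ridx /mulc /Scoef /= DeltaE /= mul1g eqxx.
rewrite -actMx mulgV actx1 -!actV !invgK gammaV.
rewrite !mu_act omega_act !mulgV !mulVg !mu1l mu1m mu1r gamma1r !mul1r !mulr1 !divr1.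
by field; rewrite !mu_nz !gamma_nz.
Qed.


Lemma sum_HPhi (w : X -> X -> X -> K) (T : B -> B -> B -> K) :
  \sum_p1 \sum_p2 \sum_p3 HPhi w p1 p2 p3 * T p1 p2 p3 =
  \sum_x1 \sum_x2 \sum_x3 w x1 x2 x3 * T (x1, 1%g) (x2, 1%g) (x3, 1%g).
Proof.
have HPhi0 p1 p2 p3 : ~~ [&& p1.2 == 1%g, p2.2 == 1%g & p3.2 == 1%g] ->
    HPhi w p1 p2 p3 = 0 by rewrite /HPhi => /negbTE ->.
rewrite sum_pair; apply: eq_bigr => x1 _; rewrite (sum_only1 1%g) => [|g1 n1]; last first.
  by apply: big1 => p2 _; apply: big1 => p3 _; rewrite HPhi0 ?(negbTE n1) ?mul0r.
rewrite sum_pair; apply: eq_bigr => x2 _; rewrite (sum_only1 1%g) => [|g2 n2]; last first.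
  by apply: big1 => p3 _; rewrite HPhi0 ?(negbTE n2) ?andbF ?mul0r.
rewrite sum_pair; apply: eq_bigr => x3 _; rewrite (sum_only1 1%g) => [|g3 n3]; last first.
  by rewrite HPhi0 ?(negbTE n3) ?andbF ?mul0r.
by rewrite /HPhi /= !eqxx.
Qed.

Lemma antipode_Phi :
  (fun r => \sum_p1 \sum_p2 \sum_p3 Phi p1 p2 p3 *
     mulH m (mulH m (mulH m (mulH m (dlt p1) beta) (SH Sm (dlt p2))) alpha) (dlt p3) r)
  = u.
Proof.
apply: functional_extensionality => -[z k]; rewrite sum_HPhi /Halpha.
under eq_bigr => x1 _ do under eq_bigr => x2 _ do under eq_bigr => x3 _ do
  rewrite SH_dlt1 mulH1 !mulH_dlt1 mulH_beta.
rewrite /= (sum_only1 z) => [|x1 ne]; last first.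
  apply: big1 => x2 _; apply: big1 => x3 _.
  rewrite /dlt xpair_eqE [z == x1]eq_sym (negbTE ne) /=.
  by case: ifP; rewrite ?mulr0 //; case: ifP; rewrite ?mul0r ?mulr0.
rewrite (sum_only1 z^-1%g) => [|x2 ne]; last first.
  apply: big1 => x3 _; rewrite [z == _^-1%g]eq_sym eqg_invLR (negbTE ne).
  by case: ifP => /=; rewrite ?mulr0.
rewrite (sum_only1 z) => [|x3 ne]; last by rewrite eq_sym (negbTE ne) mulr0.
rewrite !eqxx invgK eqxx /dlt xpair_eqE eqxx /= /Hu /=.
by case: (k == 1%g); rewrite ?mul1r ?mul0r ?mulr0 // omegaV.
Qed.

Lemma antipode_Phii :
  (fun r => \sum_p1 \sum_p2 \sum_p3 Phii p1 p2 p3 *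
     mulH m (mulH m (mulH m (mulH m (SH Sm (dlt p1)) alpha) (dlt p2)) beta)
       (SH Sm (dlt p3)) r)
  = u.
Proof.
apply: functional_extensionality => -[z k]; rewrite sum_HPhi /Halpha.
under eq_bigr => x1 _ do under eq_bigr => x2 _ do under eq_bigr => x3 _ do
  rewrite !SH_dlt1 mulH1 mulH_dlt1 mulH_beta mulH_dlt1.
rewrite /= (sum_only1 z^-1%g) => [|x1 ne]; last first.
  apply: big1 => x2 _; apply: big1 => x3 _.
  rewrite /dlt xpair_eqE [z == x1^-1%g]eq_sym eqg_invLR (negbTE ne) /=.
  by case: ifP; rewrite ?mulr0 //; case: ifP; rewrite ?mul0r ?mulr0.
rewrite (sum_only1 z) => [|x2 ne]; last first.
  apply: big1 => x3 _; rewrite [z == x2]eq_sym (negbTE ne).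
  by case: ifP => /=; rewrite ?mul0r ?mulr0.
rewrite (sum_only1 z^-1%g) => [|x3 ne]; last first.
  by rewrite [z == x3^-1%g]eq_sym eqg_invLR (negbTE ne) mulr0.
rewrite !eqxx !invgK eqxx /dlt xpair_eqE eqxx /= /Hu /=.
by case: (k == 1%g); rewrite ?mul1r ?mul0r ?mulr0 // mulVf ?omega_nz.
Qed.

Lemma H_antipode : antipode_ax m u dl e Phi alpha beta Sm Phii.
Proof.
split; first exact: SH_bij.
split; first exact: SH_mul.
split; first exact: SH_one.
split; first exact: antipode_alpha.
split; first exact: antipode_beta.
by split; [exact: antipode_Phi | exact: antipode_Phii].
Qed.

Local Notation Rm := (HR d c).

Definition Ri (p q : B) : K :=
  if (p.2 == 1%g) && (q.2 == (d p.1)^-1)%g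
  then gamma (d p.1) (d p.1)^-1 q.1 / c p.1 (act (d p.1)^-1 q.1) else 0.

Lemma R_Ri : mul2 m Rm Ri = one2 u.
Proof.
apply: funext2 => r1 r2; rewrite mul2E (sum_only1 1%g) => [|h1 ne]; last first.
  by apply: big1 => h2 _; rewrite /Ri /= (negbTE ne) mulr0 !mul0r.
rewrite (sum_only1 (d r1.1)^-1%g) => [|h2 ne]; last first.
  by rewrite /Ri /= eqxx (negbTE ne) mulr0 !mul0r.
rewrite lidx1 mulc1 mulr1 /Ri /HR /one2 /Hu /= !eqxx /=.
case: r1 r2 => [x g1] [y g2] /=.
split1 g1; rewrite ?mul0r //= invgK -{2}[d x]mul1g (inj_eq (mulIg _)).
split1 g2; rewrite ?mul0r ?mulr0 //= /mulc /= mul1g invgK.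
by field; rewrite c_nz gamma_nz.
Qed.

Lemma Ri_R : mul2 m Ri Rm = one2 u.
Proof.
apply: funext2 => r1 r2; rewrite mul2E (sum_only1 1%g) => [|h1 ne]; last first.
  by apply: big1 => h2 _; rewrite /HR /= (negbTE ne) mulr0 !mul0r.
rewrite (sum_only1 (d r1.1)) => [|h2 ne]; last first.
  by rewrite /HR /= eqxx (negbTE ne) mulr0 !mul0r.
rewrite lidx1 mulc1 mulr1 /Ri /HR /one2 /Hu /= !eqxx /=.
case: r1 r2 => [x g1] [y g2] /=.
split1 g1; rewrite ?mul0r //= -{2}[(d x)^-1%g]mul1g (inj_eq (mulIg _)).
split1 g2; rewrite ?mul0r ?mulr0 //= /mulc /= mul1g actK gammaV.
by field; rewrite c_nz gamma_nz.
Qed.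

Lemma R_Delta f : flip (DeltaH dl f) = mul2 m (mul2 m Rm (DeltaH dl f)) Ri.
Proof.
apply: funext2 => q r; rewrite [RHS]mul2E (sum_only1 1%g) => [|h1 ne]; last first.
  by apply: big1 => h2 _; rewrite /Ri /= (negbTE ne) mulr0 !mul0r.
rewrite (sum_only1 (d q.1)^-1%g) => [|h2 ne]; last first.
  by rewrite /Ri /= eqxx (negbTE ne) mulr0 !mul0r.
rewrite lidx1 mulc1 mulr1 mul2E (sum_only1 q.2) => [|k1 ne]; last first.
  by apply: big1 => k2 _; rewrite /HR /= divg_eq1 eq_sym (negbTE ne) !mul0r.
rewrite (sum_only1 q.2) => [|k2 ne]; last first.
  by rewrite DeltaE /= (negbTE ne) mulr0 !mul0r.
rewrite ridx_id lidx_id mulc_id mulr1 /flip !DeltaE.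
case: q r => [a g] [b g2]; rewrite /HR /Ri /lidx /ridx /mulc /= !eqxx /= !invgK d_act.
rewrite !(inj_eq (mulIg _)); split_eq g2 g; rewrite /= ?mul0r ?mulr0 // ?eqxx /=.
have -> : (a * act (d a)^-1 b = b * a)%g by rewrite act_dV !mulgA mulgV mul1g.
have := c_act g a (act (d a)^-1 b).
rewrite act_dV !mulgA mulgV mul1g mulgK => ->.
have := gamma_cocycle g (d a) (d a)^-1 b.
rewrite mulgV gamma1m mulr1 act_dV => ->.
by field; rewrite !c_nz !mu_nz !gamma_nz.
Qed.

Lemma hexagon1 : D_id dl Rm = mul3 m (mul3 m (mul3 m (mul3 m (leg312 Phi)
  (leg13 u Rm)) (leg132 Phii)) (leg23 u Rm)) Phi.
Proof.
apply: funext3 => s1 s2 s3.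
rewrite mul3_deg1r; last exact: deg1_HPhi.
rewrite mul3E (sum_only1 1%g) => [|h1 ne]; last first.
  apply: big1 => h2 _; apply: big1 => h3 _.
  by rewrite /leg23 /Hu /= (negbTE ne) !(mul0r, mulr0).
rewrite (sum_only1 1%g) => [|h2 ne]; last first.
  by apply: big1 => h3 _; rewrite /leg23 /HR /= (negbTE ne) !(mul0r, mulr0).
rewrite (sum_only1 (d s2.1)) => [|h3 ne]; last first.
  by rewrite /leg23 /HR /= eqxx (negbTE ne) !(mul0r, mulr0).
rewrite !lidx1 !mulc1 !mulr1.
rewrite mul3_deg1r; last by move=> p q r /deg1_HPhi /and3P [-> -> ->].
rewrite mul3_deg1l; last by move=> p q r /deg1_HPhi /and3P [-> -> ->].
rewrite D_idE /leg23 /leg13 /leg312 /leg132 /HR /Phii /HPhi /Hu /lidx /ridx /mulc.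
case: s1 s2 s3 => [x1 g1] [x2 g2] [x3 g3] /=.
split1 g1; split1 g2;
  rewrite /= ?eqxx /= ?(mulr0, mul0r) ?mulr1 ?mul1r ?if_same //= ?(mulr0, mul0r) //.
rewrite dM divg_eq; split_eq g3 (d x1 * d x2)%g; rewrite ?(mul0r, mulr0) //.
rewrite mulgK mu1l !act1 -actM -dM !act_d c_mull.
by field; rewrite !omega_nz gamma_nz.
Qed.

Lemma hexagon2 : id_D dl Rm = mul3 m (mul3 m (mul3 m (mul3 m (leg231 Phii)
  (leg13 u Rm)) (leg213 Phi)) (leg12 u Rm)) Phii.
Proof.
apply: funext3 => s1 s2 s3.
rewrite mul3_deg1r; last exact: deg1_HPhi.
rewrite mul3E (sum_only1 1%g) => [|h1 ne]; last first.
  apply: big1 => h2 _; apply: big1 => h3 _.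
  by rewrite /leg12 /HR /= (negbTE ne) !(mul0r, mulr0).
rewrite (sum_only1 (d s1.1)) => [|h2 ne]; last first.
  by apply: big1 => h3 _; rewrite /leg12 /HR /= eqxx (negbTE ne) !(mul0r, mulr0).
rewrite (sum_only1 1%g) => [|h3 ne]; last first.
  by rewrite /leg12 /Hu /= (negbTE ne) !(mul0r, mulr0).
rewrite !lidx1 !mulc1 !mulr1.
rewrite mul3_deg1r; last by move=> p q r /deg1_HPhi /and3P [-> -> ->].
rewrite mul3_deg1l; last by move=> p q r /deg1_HPhi /and3P [-> -> ->].
rewrite id_DE /leg12 /leg13 /leg231 /leg213 /HR /Phii /HPhi /Hu /lidx /ridx /mulc.
case: s1 s2 s3 => [x1 g1] [x2 g2] [x3 g3] /=.
split1 g1; rewrite /= ?eqxx /= ?(mulr0, mul0r) ?mulr1 ?mul1r ?if_same //= ?(mulr0, mul0r) //.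
rewrite divg_eq1; split_eq g2 (d x1); last first.
  by rewrite ?if_same /= ?(mulr0, mul0r) //; case: ifP; rewrite ?(mulr0, mul0r).
split_eq g3 (d x1); rewrite /= ?(mulr0, mul0r) //.
rewrite ?eqxx mulgV gamma1l invr1 mulr1 !act1 !act_d c_mulr.
by field; rewrite !omega_nz mu_nz.
Qed.

Lemma H_quasitriangular : quasitriangular_ax m u dl Phi Rm Phii Ri.
Proof.
split; first exact: R_Ri.
split; first exact: Ri_R.
split; first exact: R_Delta.
by split; [exact: hexagon1 | exact: hexagon2].
Qed.

Theorem H_quasitriangular_quasiHopf :
  quasitriangular_quasiHopf m u dl e Phi alpha beta Sm Rm.
Proof.
split; first exact: H_assoc_algebra.
exists Phii, Ri; split; first exact: H_quasi_bialgebra.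
by split; [exact: H_antipode | exact: H_quasitriangular].
Qed.

End CrossedModuleAlgebra.

Unset Implicit Arguments. Set Strict Implicit.

Theorem proposition6p1 (K : closedFieldType) (G X : finGroupType)
  (act : G -> X -> X) (d : X -> G)
  (omega : X -> X -> X -> K) (gamma : G -> G -> X -> K)
  (mu : G -> X -> X -> K) (c : X -> X -> K) :
  [pchar K] =i pred0 ->
  crossed_module act d ->
  quasi_abelian_3cocycle act d omega gamma mu c ->
  normalized_cocycle omega gamma mu c ->
  quasitriangular_quasiHopf
    (Hm act gamma) (@Hu K G X) (Hdl mu) (@He K G X) (HPhi omega)
    (@Halpha K G X) (Hbeta omega) (HS act gamma mu) (HR d c).
Proof. by move=> _; exact: H_quasitriangular_quasiHopf. Qed.
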